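(* Let $\diamond$ be a weak independence on the analysis instance $\mathcal{D}$ and let $\prec_s$ be the size order. The feasible prefix $\mathcal{P}^{\prec_s}_{\mathcal{D},\diamond}$ of the unfolding $\mathcal{U}_{\mathcal{D},\diamond}$ is $\mathcal{D}$-complete.
   Context: An analysis instance $\mathcal{D}=\langle D,\sqsubseteq,F,d_0\rangle$ consists of a lattice $\langle D,\sqsubseteq,\sqcup,\sqcap\rangle$ with least element $\bot$, monotone bottom-strict transformers $F$, and initial element $d_0$. For $\sigma=f_1\ldots f_m$, $\mathrm{state}(\sigma)=(f_m\circ\cdots\circ f_1)(d_0)$; $\mathrm{reach}(\mathcal{D})$ is the set of reachable elements. A relation $\diamond\subseteq F\times F$ is a weak independence if it is symmetric, irreflexive, and $f\diamond f'$ implies $f(f'(d))=f'(f(d))$ for every $d\in\mathrm{reach}(\mathcal{D})$. A labelled prime event structure (PES) is $\langle E,<,\#,h\rangle$ with $<$ a strict partial order with finite down-sets, $\#$ a symmetric irreflexive conflict relation inherited along $<$, and a labelling $h$. A configuration is a finite causally closed, conflict-free set of events; $[e]=\{e'\colon e'<e\}\cup\{e\}$ is the local configuration of $e$. The interleavings $\mathrm{inter}(C)$ are the label sequences of linearizations of $C$ respecting $<$, and $\mathrm{state}(C)$ is the greatest lower bound (meet) in $D$ of $\{\mathrm{state}(\sigma)\colon\sigma\in\mathrm{inter}(C)\}$. The unfolding $\mathcal{U}_{\mathcal{D},\diamond}$ is obtained from the empty PES by repeatedly adding events $e=\langle f,C\rangle$ where $C$ is a configuration, $f$ is enabled (not yielding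 $\bot$) at $\mathrm{state}(C)$ and $\neg(f\diamond h(e'))$ for every $<$-maximal $e'\in C$, setting $e'<e$ for $e'\in C$, $e'\# e$ for other events $e'\notin C$ with $\neg(f\diamond h(e'))$, and $h(e)=f$, until saturation. Prefixes of a PES are sub-PESs closed under causal predecessors with the projected relations. A strategy is a strict partial order $\prec$ on finite configurations of $\mathcal{U}_{\mathcal{D},\diamond}$ with $C\subsetneq C'\Rightarrow C\prec C'$. An event $e$ is $\prec$-feasible if no causal predecessor of $e$ is a $\prec$-cutoff; a $\prec$-feasible event $e$ is a $\prec$-cutoff if there is a $\prec$-feasible event $e'$ with $[e']\prec[e]$ and $\mathrm{state}([e])\sqsubseteq\mathrm{state}([e'])$. The feasible prefix $\mathcal{P}^{\prec}_{\mathcal{D},\diamond}$ is the unique prefix of $\mathcal{U}_{\mathcal{D},\diamond}$ containing exactly the $\prec$-feasible events that are not $\prec$-cutoffs. The size order is $C\prec_s C'$ iff $|C|<|C'|$. A PES is $\mathcal{D}$-complete iff for every $d\in\mathrm{reach}(\mathcal{D})$ there is a configuration $C$ of it with $d\sqsubseteq\mathrm{state}(C)$. *)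

From HB Require Import structures.
From mathcomp Require Import all_boot all_order.

Set Implicit Arguments.
Unset Strict Implicit.
Unset Printing Implicit Defensive.

Import Order.TTheory.
Local Open Scope order_scope.

(* Events of the unfolding: an event <f, C> is a label f together with its  *)
(* (finite) set of causal predecessors C, represented as a duplicate-free    *)
(* list in canonical form (see [canonical_hist] below).                      *)

Inductive ev (Fn : Type) : Type := Ev : Fn -> seq (ev Fn) -> ev Fn.

Section EvChoice.
Variable Fn : choiceType.

Fixpoint ev_enc (e : ev Fn) : GenTree.tree Fn :=
  let: Ev f C := e in GenTree.Node 0 (GenTree.Leaf f :: map ev_enc C).

Fixpoint ev_dec (t : GenTree.tree Fn) : option (ev Fn) :=
  match t with
  | GenTree.Node 0 (GenTree.Leaf f :: ts) => Some (Ev f (pmap ev_dec ts))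
  | _ => None
  end.

Fixpoint ev_encK (e : ev Fn) : ev_dec (ev_enc e) = Some e :=
  match e return ev_dec (ev_enc e) = Some e with
  | Ev f C =>
    f_equal (fun C' => Some (Ev f C'))
      ((fix loop (C : seq (ev Fn)) : pmap ev_dec (map ev_enc C) = C :=
          match C return pmap ev_dec (map ev_enc C) = C with
          | [::] => erefl
          | e :: C' =>
            @eq_ind_r _ (Some e)
              (fun o => oapp (cons^~ (pmap ev_dec (map ev_enc C')))
                                 (pmap ev_dec (map ev_enc C')) o = e :: C')
              (f_equal (cons e) (loop C')) (ev_dec (ev_enc e)) (ev_encK e)
          end) C)
  end.

HB.instance Definition _ := Equality.copy (ev Fn) (pcan_type ev_encK).
HB.instance Definition _ := Choice.copy (ev Fn) (pcan_type ev_encK).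
End EvChoice.

Definition lab (Fn : Type) (e : ev Fn) : Fn := let: Ev f _ := e in f.
Definition hist (Fn : Type) (e : ev Fn) : seq (ev Fn) := let: Ev _ C := e in C.

Section Analysis.
Variables (disp : Order.disp_t) (D : bLatticeType disp).
Variables (Fn : choiceType) (app : Fn -> D -> D) (d0 : D).
Variable indep : Fn -> Fn -> Prop.

Definition run (s : seq Fn) : D := foldl (fun d f => app f d) d0 s.

Definition reach (d : D) : Prop := exists s : seq Fn, d = run s.

(* The analysis instance: monotone, bottom-strict transformers; F is a set,
   represented by the injective family [app]. *)
Definition analysis_instance : Prop :=
  injective app /\
  (forall f x y, x <= y -> app f x <= app f y) /\
  (forall f, app f \bot = \bot).

Definition weak_independence : Prop :=
  (forall f g, indep f g -> indep g f) /\
  (forall f, ~ indep f f) /\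
  (forall f g d, indep f g -> reach d -> app f (app g d) = app g (app f d)).

Local Notation event := (ev Fn).

Definition loc (e : event) : seq event := e :: hist e.

Fixpoint respects (C pre s : seq event) : bool :=
  match s with
  | [::] => true
  | e :: s' => all (fun p => (p \in C) ==> (p \in pre)) (hist e)
               && respects C (rcons pre e) s'
  end.

Definition inter (C : seq event) : seq (seq Fn) :=
  [seq map (@lab Fn) s | s <- permutations C & respects C [::] s].

Definition bigmeet (s : seq D) : D :=
  if s is x :: s' then foldl Order.meet x s' else \bot.

Definition stateC (C : seq event) : D := bigmeet (map run (inter C)).

Definition dconf (e e' : event) : Prop :=
  e' \notin loc e /\ e \notin loc e' /\ ~ indep (lab e) (lab e').
Definition conf (e1 e2 : event) : Prop :=
  exists2 a, a \in loc e1 & exists2 b, b \in loc e2 & dconf a b.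

Definition causally_closed (C : seq event) : Prop :=
  forall e, e \in C -> forall p, p \in hist e -> p \in C.
Definition conflict_free (C : seq event) : Prop :=
  forall e e', e \in C -> e' \in C -> ~ conf e e'.

Definition config_of (P : event -> Prop) (C : seq event) : Prop :=
  uniq C /\ (forall e, e \in C -> P e) /\ causally_closed C /\ conflict_free C.

Definition maximal_in (C : seq event) (e : event) : Prop :=
  e \in C /\ forall e'', e'' \in C -> e \notin hist e''.

(* The history list of an event is the canonical representative (chosen
   once and for all) of its permutation class, so that <f,C> is determined
   by f and the SET C. *)
Definition canonical_hist (C : seq event) : Prop := C = choose (perm_eq C) C.

Inductive inU : event -> Prop :=
| inU_ext (f : Fn) (C : seq event) :
    canonical_hist C ->
    uniq C ->
    (forall e, e \in C -> inU e) ->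
    causally_closed C ->
    conflict_free C ->
    app f (stateC C) != \bot ->
    (forall e', maximal_in C e' -> ~ indep f (lab e')) ->
    inU (Ev f C).

Definition size_order (C C' : seq event) : Prop := (size C < size C')%N.

(* The mutual recursive
   definition is well founded since every relevant event has a strictly
   smaller local configuration; [cutoff_upto n e] is the cutoff predicate for
   events with |[e]| <= n (the fuel n never changes the answer). *)
Definition feasible_wrt (cut : event -> Prop) (e : event) : Prop :=
  inU e /\ (forall p, p \in hist e -> ~ cut p).

Fixpoint cutoff_upto (n : nat) (e : event) : Prop :=
  match n with
  | 0 => False
  | m.+1 =>
    feasible_wrt (cutoff_upto m) e /\
    exists e', feasible_wrt (cutoff_upto m) e' /\
               size_order (loc e') (loc e) /\
               stateC (loc e) <= stateC (loc e')
  end.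

Definition cutoff (e : event) : Prop := cutoff_upto (size (loc e)) e.
Definition feasible (e : event) : Prop := feasible_wrt cutoff e.

Definition in_feasible_prefix (e : event) : Prop := feasible e /\ ~ cutoff e.

Definition D_complete (P : event -> Prop) : Prop :=
  forall d, reach d -> exists C, config_of P C /\ d <= stateC C.

End Analysis.

(* By induction on the length of a run [s ++ [:: f]], every reachable state
   is below the state of a configuration [C] of the prefix with [|C| <= |s|].
   All linearizations of a conflict-free configuration yield the same run, so
   states of configurations are reachable and weak independence lets [f]
   commute with every event of [C] it is independent of.  Hence, if [H] is the
   causal past in [C] of the events dependent on [f] and [e = <f, H>], then
   [f (state C)] is the remainder [C \ H] replayed from [state [e]].  If [e] is
   not a cutoff, [e :: C] is the required configuration.  Otherwise a witness
   [e'] with [|[e']| <= |H|] and [state [e] <= state [e']] gives the shorter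
   run "linearization of [e'], then [C \ H]", whose state is at least as
   large, and the induction hypothesis applies to it. *)

From HB Require Import structures.
From mathcomp Require Import all_boot all_order.
From Stdlib Require Import ClassicalEpsilon.

Set Implicit Arguments.
Unset Strict Implicit.
Unset Printing Implicit Defensive.
Import Order.TTheory.
Local Open Scope order_scope.

Section Linearization.
Variable Fn : choiceType.
Local Notation event := (ev Fn).

Fixpoint ev_size (e : event) : nat :=
  let: Ev _ C := e in (sumn (map ev_size C)).+1.

Lemma ev_size_hist (x p : event) : p \in hist x -> (ev_size p < ev_size x)%N.
Proof.
case: x => f C /=; rewrite ltnS.
elim: C => [|a C IH] //=; rewrite in_cons => /orP [/eqP -> | /IH h].
  exact: leq_addr.
exact: leq_trans h (leq_addl _ _).
Qed.

Lemma notin_hist (x : event) : x \notin hist x.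
Proof. by apply/negP => /ev_size_hist; rewrite ltnn. Qed.

Lemma sub_respects (C pre pre' s : seq event) :
  {subset pre <= pre'} -> respects C pre s -> respects C pre' s.
Proof.
elim: s pre pre' => [|x s IH] pre pre' //= sub /andP [hx hs].
apply/andP; split.
  by apply/allP => p /(allP hx) /implyP h; apply/implyP => /h /sub.
apply: IH hs => y; rewrite !mem_rcons !in_cons => /orP [->|/sub ->] //.
by rewrite orbT.
Qed.

Lemma respects_cat (C pre s1 s2 : seq event) :
  respects C pre (s1 ++ s2) = respects C pre s1 && respects C (pre ++ s1) s2.
Proof.
elim: s1 pre => [|x s1 IH] pre /=; first by rewrite cats0.
by rewrite IH cat_rcons andbA.
Qed.

Lemma respects_mem (C pre s : seq event) x p :
  respects C pre s -> x \in s -> p \in hist x -> p \in C -> p \in pre ++ s.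
Proof.
elim: s pre => [|y s IH] pre //= /andP [hy hs].
rewrite in_cons => /orP [/eqP -> | xs] hp pC.
  by have := allP hy p hp; rewrite pC mem_cat /= => ->.
by rewrite -cat_rcons; apply: IH hs xs hp pC.
Qed.

Definition ev_le (x y : event) := (ev_size x <= ev_size y)%N.

Lemma ev_le_trans : transitive ev_le.
Proof. by move=> x y z; apply: leq_trans. Qed.

(* Causes are strictly smaller than their effects, so any [ev_le]-sorted list
   lists the causes of an event before the event itself. *)
Lemma sorted_respects (C pre l : seq event) :
  sorted ev_le l ->
  (forall x, x \in l -> forall p, p \in hist x -> p \in C -> p \in pre ++ l) ->
  respects C pre l.
Proof.
elim: l pre => [|x l IH] pre //= hs hl; apply/andP; split.
  apply/allP => p hp; apply/implyP => pC.
  have := hl x (mem_head _ _) p hp pC.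
  rewrite mem_cat in_cons => /orP [->//|/orP [/eqP px|pl]].
    by move: hp; rewrite px (negbTE (notin_hist x)).
  have := allP (order_path_min ev_le_trans hs) p pl.
  by rewrite /ev_le leqNgt (ev_size_hist hp).
apply: IH; first exact: path_sorted hs.
move=> y yl p hp pC; rewrite cat_rcons.
by apply: hl hp pC; rewrite in_cons yl orbT.
Qed.

Definition lin (C : seq event) := sort ev_le C.

Lemma lin_sorted C : sorted ev_le (lin C).
Proof. by apply: sort_sorted => x y; apply: leq_total. Qed.

Lemma perm_lin C : perm_eq (lin C) C.
Proof. exact: permEl (perm_sort _ _). Qed.

Lemma sorted_filter_lin a C : sorted ev_le [seq x <- lin C | a x].
Proof. exact/sorted_filter/lin_sorted/ev_le_trans. Qed.

Lemma lin_respects C : causally_closed C -> respects C [::] (lin C).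
Proof.
move=> cc; apply: sorted_respects; first exact: lin_sorted.
move=> x; rewrite (perm_mem (perm_lin C)) => xC p hp _.
by rewrite /= (perm_mem (perm_lin C)) (cc x xC p hp).
Qed.

Definition canon (C : seq event) : seq event := choose (perm_eq C) C.

Lemma perm_canon C : perm_eq (canon C) C.
Proof. by rewrite perm_sym; apply: chooseP. Qed.

Lemma canonical_hist_canon C : canonical_hist (canon C).
Proof.
rewrite /canonical_hist (eq_choose (permPl (perm_canon C))).
by apply: choose_id; rewrite // perm_sym perm_canon.
Qed.

End Linearization.

Section BigMeet.
Variables (disp : Order.disp_t) (D : bLatticeType disp).

Lemma foldl_meet_le (x : D) (l : seq D) v : v \in x :: l -> foldl Order.meet x l <= v.
Proof.
elim: l x v => [|y l IH] x v /=; first by rewrite inE => /eqP ->.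
rewrite !inE => /or3P [/eqP ->|/eqP ->|vl].
- exact: le_trans (IH _ _ (mem_head _ _)) (leIl _ _).
- exact: le_trans (IH _ _ (mem_head _ _)) (leIr _ _).
- by apply: IH; rewrite inE vl orbT.
Qed.

Lemma bigmeet_le (l : seq D) v : v \in l -> bigmeet l <= v.
Proof. by case: l => [|x l] //; apply: foldl_meet_le. Qed.

Lemma bigmeet_const (l : seq D) v : v \in l -> {in l, forall w, w = v} -> bigmeet l = v.
Proof.
case: l => [|x l] //= _ h; rewrite (h x (mem_head _ _)).
have {h} : {in l, forall w, w = v} by move=> w wl; apply: h; rewrite inE wl orbT.
elim: l => [|y l IH] //= h; rewrite (h y (mem_head _ _)) meetxx.
by apply: IH => w wl; apply: h; rewrite inE wl orbT.
Qed.

End BigMeet.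

Section Unfolding.
Variables (disp : Order.disp_t) (D : bLatticeType disp).
Variables (Fn : choiceType) (app : Fn -> D -> D) (d0 : D).
Variable indep : Fn -> Fn -> Prop.
Hypothesis HA : analysis_instance app.
Hypothesis HW : weak_independence app d0 indep.
Local Notation event := (ev Fn).
Local Notation reach := (reach app d0).

Definition labs (s : seq event) : seq Fn := map (@lab Fn) s.

Lemma run_cat x s t : run app x (s ++ t) = run app (run app x s) t.
Proof. exact: foldl_cat. Qed.

Lemma reach_run x t : reach x -> reach (run app x t).
Proof. by case=> s ->; exists (s ++ t); rewrite run_cat. Qed.

Lemma run_le x y t : x <= y -> run app x t <= run app y t.
Proof.
have [_ [mono _]] := HA.
by elim: t x y => [|g t IH] x y //= xy; apply/IH/mono.
Qed.

Lemma run_bot t : run app \bot t = \bot.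
Proof. by have [_ [_ strict]] := HA; elim: t => [|g t IH] //=; rewrite strict. Qed.

Lemma app_run_indep f x t : reach x -> {in t, forall g, indep f g} ->
  app f (run app x t) = run app (app f x) t.
Proof.
have [_ [_ commute]] := HW.
elim: t x => [|g t IH] x //= rx ft.
rewrite IH; first by rewrite commute //; apply: ft; rewrite mem_head.
  by apply: (reach_run [:: g]).
by move=> g' g't; apply: ft; rewrite inE g't orbT.
Qed.

(* If [y] comes first in one linearization and after [a] in another, no event
   of [a] can be a cause or an effect of [y]; conflict-freeness then forces
   independence. *)
Lemma indep_overtaken C pre y s a b :
  conflict_free indep C -> {subset y :: s <= C} -> uniq (pre ++ y :: s) ->
  perm_eq (y :: s) (a ++ y :: b) -> respects C pre (y :: s) ->
  respects C pre a -> {in a, forall z, indep (lab y) (lab z)}.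
Proof.
move=> cf sub u pe /andP [ry _] ra z za.
have yC : y \in C by apply: sub; rewrite mem_head.
have zC : z \in C by apply: sub; rewrite (perm_mem pe) mem_cat za.
move: (u); rewrite cat_uniq => /and3P [_ /hasPn pre_s uys].
have yna : y \notin a by move: uys; rewrite (perm_uniq pe) cat_uniq => /and3P [_ /norP []].
have zy : z != y by apply: contraNneq yna => <-.
have znh : z \notin hist y.
  apply/negP => /(allP ry); rewrite zC /=; apply/negP/pre_s.
  by rewrite (perm_mem pe) mem_cat za.
have ynh : y \notin hist z.
  apply/negP => /(respects_mem ra za)/(_ yC).
  by rewrite mem_cat (negbTE yna) orbF; apply/negP/pre_s/mem_head.
apply: NNPP => dep; apply: (cf y z yC zC).
exists y; first exact: mem_head.
exists z; first exact: mem_head.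
by rewrite /dconf /loc !inE !negb_or zy znh eq_sym zy ynh.
Qed.

Lemma run_linearization_eq (C pre s1 s2 : seq event) x :
  conflict_free indep C -> {subset s1 <= C} -> uniq (pre ++ s1) ->
  perm_eq s1 s2 -> respects C pre s1 -> respects C pre s2 -> reach x ->
  run app x (labs s1) = run app x (labs s2).
Proof.
elim: s1 pre s2 x => [|y s1 IH] pre s2 x cf sub u pe r1 r2 rx.
  by case: s2 pe {r2} => // z s2; rewrite perm_sym => /perm_nilP.
have ys2 : y \in s2 by rewrite -(perm_mem pe) mem_head.
case/splitPr: s2 / ys2 pe r2 => a b pe r2.
move: (r2); rewrite respects_cat /= => /andP [ra /andP [_ rb]].
have ind := indep_overtaken cf sub u pe r1 ra.
rewrite /labs map_cat /= run_cat /= app_run_indep //; last first.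
  by move=> _ /mapP [z za ->]; apply: ind.
rewrite -run_cat -map_cat; case/andP: r1 => _ r1.
apply: (IH (rcons pre y)) => //; first by move=> z zs; apply: sub; rewrite inE zs orbT.
- by rewrite cat_rcons.
- rewrite -(perm_cons y); apply: (perm_trans pe).
  by rewrite -[y :: b]cat1s perm_catCA.
- rewrite respects_cat; apply/andP; split.
    by apply: sub_respects ra => z; rewrite mem_rcons inE => ->; rewrite orbT.
  apply: sub_respects rb => z; rewrite mem_rcons inE !mem_cat mem_rcons inE.
  by case/orP => [->|/orP [->|->]]; rewrite ?orbT.
- exact: (reach_run [:: lab y]).
Qed.

Lemma mem_inter (C s : seq event) :
  perm_eq s C -> respects C [::] s -> labs s \in inter C.
Proof.
move=> ps rs; apply/mapP; exists s => //.
by rewrite mem_filter rs mem_permutations ps.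
Qed.

Lemma stateC_le (C s : seq event) :
  perm_eq s C -> respects C [::] s -> stateC app d0 C <= run app d0 (labs s).
Proof. by move=> ps rs; apply/bigmeet_le/map_f/mem_inter. Qed.

Lemma stateC_linearization (C s : seq event) :
  uniq C -> conflict_free indep C -> perm_eq s C -> respects C [::] s ->
  stateC app d0 C = run app d0 (labs s).
Proof.
move=> uC cfC ps rs; apply: bigmeet_const; first exact/map_f/mem_inter.
move=> _ /mapP [_ /mapP [s' + ->] ->]; rewrite mem_filter mem_permutations.
case/andP=> rs' ps'; apply: (@run_linearization_eq C [::]) => //.
- by move=> z; rewrite (perm_mem ps').
- by rewrite /= (perm_uniq ps').
- by rewrite (perm_trans ps') // perm_sym.
- by exists [::].
Qed.

Lemma conflict_free_sub (C C' : seq event) :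
  {subset C <= C'} -> conflict_free indep C' -> conflict_free indep C.
Proof. by move=> sub cf x y /sub xC /sub yC; apply: cf. Qed.

Section Configuration.
Variable C : seq event.
Hypotheses (uC : uniq C) (ccC : causally_closed C) (cfC : conflict_free indep C).

Lemma stateC_lin : stateC app d0 C = run app d0 (labs (lin C)).
Proof. exact: stateC_linearization (perm_lin C) (lin_respects ccC). Qed.

Lemma reach_stateC : reach (stateC app d0 C).
Proof. by rewrite stateC_lin; exists (labs (lin C)). Qed.

Lemma perm_filter_lin (H : seq event) :
  uniq H -> {subset H <= C} -> perm_eq [seq x <- lin C | x \in H] H.
Proof.
move=> uH subH; apply: uniq_perm => //.
  by rewrite filter_uniq // (perm_uniq (perm_lin C)).
move=> x; rewrite mem_filter (perm_mem (perm_lin C)).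
by case xH: (x \in H); rewrite //= subH.
Qed.

Lemma size_filter_lin (H : seq event) : uniq H -> {subset H <= C} ->
  (size H + size [seq x <- lin C | x \notin H])%N = size C.
Proof.
move=> uH subH; rewrite -(perm_size (perm_filter_lin uH subH)) !size_filter.
by rewrite count_predC (perm_size (perm_lin C)).
Qed.

Lemma stateC_closed_sub (H : seq event) :
  uniq H -> causally_closed H -> {subset H <= C} ->
  stateC app d0 C = run app (stateC app d0 H) (labs [seq x <- lin C | x \notin H]).
Proof.
move=> uH ccH subH; have plH := perm_filter_lin uH subH.
set lH := [seq x <- lin C | x \in H] in plH *.
have respects_lH C' : {subset H <= C'} -> respects C' [::] lH.
  move=> HC'; apply: sorted_respects; first exact: sorted_filter_lin.
  by move=> x; rewrite (perm_mem plH) => xH p hp _; rewrite (perm_mem plH) (ccH x xH).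
rewrite (@stateC_linearization H lH) ?respects_lH //; last exact: conflict_free_sub cfC.
rewrite -run_cat -map_cat; apply: stateC_linearization => //.
  by rewrite perm_filterC perm_lin.
rewrite respects_cat respects_lH //=.
apply: sorted_respects; first exact: sorted_filter_lin.
move=> x _ p _ pC; rewrite mem_cat (perm_mem plH) mem_filter (perm_mem (perm_lin C)) pC.
by rewrite andbT orbN.
Qed.

Lemma stateC_cons (e : event) :
  e \notin C -> {subset hist e <= C} -> conflict_free indep (e :: C) ->
  stateC app d0 (e :: C) = app (lab e) (stateC app d0 C).
Proof.
move=> eC he cfeC.
rewrite stateC_lin (@stateC_linearization _ (rcons (lin C) e)) /=; first last.
- rewrite -cats1 respects_cat /= andbT; apply/andP; split.
    apply: sorted_respects; first exact: lin_sorted.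
    move=> x; rewrite (perm_mem (perm_lin C)) => xC p hp _.
    by rewrite /= (perm_mem (perm_lin C)) (ccC xC hp).
  by apply/allP => p /he pC; rewrite (perm_mem (perm_lin C)) pC implybT.
- by rewrite perm_rcons perm_cons perm_lin.
- exact: cfeC.
- by rewrite /= eC uC.
by rewrite /labs map_rcons -cats1 run_cat.
Qed.

End Configuration.

(* Every conflict involving [e] and [C] would be inherited from an immediate
   conflict between [e] and an event of [C] outside [loc e]. *)
Lemma conflict_free_cons (C : seq event) e :
  conflict_free indep C -> causally_closed C -> {subset hist e <= C} ->
  {in C, forall a, a \notin loc e -> indep (lab e) (lab a)} ->
  conflict_free indep (e :: C).
Proof.
move=> cfC ccC he ind.
have loc_closed z : z \in e :: C -> {subset loc z <= e :: C}.
  rewrite inE => /orP [/eqP -> | zC] a; rewrite /loc !inE => /orP [/eqP -> | ah].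
  - by rewrite eqxx.
  - by rewrite he ?orbT.
  - by rewrite zC orbT.
  - by rewrite (ccC _ zC _ ah) orbT.
have [sym _] := HW.
move=> x y /loc_closed xC /loc_closed yC [a /xC + [b /yC + [ab [ba dep]]]].
rewrite !inE => /orP [/eqP ae | aC] /orP [/eqP be | bC].
- by move: ab; rewrite ae be /loc mem_head.
- by apply: dep; rewrite ae; apply: ind; rewrite // -ae.
- by apply: dep; apply: sym; rewrite be; apply: ind; rewrite // -be.
- apply: (cfC a b aC bC); exists a; first exact: mem_head.
  by exists b; first exact: mem_head.
Qed.

Definition indepb (f g : Fn) : bool :=
  if excluded_middle_informative (indep f g) then true else false.

Lemma indepbP f g : reflect (indep f g) (indepb f g).
Proof. by rewrite /indepb; case: excluded_middle_informative => h; constructor. Qed.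

Local Notation inU := (inU app d0 indep).

Lemma inU_hist_config e : inU e -> config_of indep inU (hist e).
Proof. by case=> f C /= _ uC inUC ccC cfC _ _. Qed.

Lemma causally_closed_loc e : inU e -> causally_closed (loc e).
Proof.
move=> /inU_hist_config [_ [_ [cc _]]] x.
rewrite inE => /orP [/eqP -> | xh] p hp; rewrite inE ?hp ?(cc x xh p hp) orbT //.
Qed.

(* History of the [f]-labelled event extending [C]. *)
Definition dep_past (f : Fn) (C : seq event) : seq event :=
  canon [seq a <- C | has (fun b => ~~ indepb f (lab b) && (a \in loc b)) C].

Section DepPast.
Variables (f : Fn) (C : seq event).
Hypothesis cC : config_of indep inU C.
Local Notation H := (dep_past f C).
Local Notation e := (Ev f (dep_past f C)).

Lemma mem_dep_past a :
  (a \in H) = (a \in C) && has (fun b => ~~ indepb f (lab b) && (a \in loc b)) C.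
Proof. by rewrite (perm_mem (perm_canon _)) mem_filter andbC. Qed.

Lemma dep_past_sub : {subset H <= C}.
Proof. by move=> a; rewrite mem_dep_past => /andP []. Qed.

Lemma dep_past_indep a : a \in C -> a \notin H -> indep f (lab a).
Proof.
move=> aC; rewrite mem_dep_past aC /= => /hasPn/(_ a aC).
by rewrite mem_head andbT negbK => /indepbP.
Qed.

Lemma uniq_dep_past : uniq H.
Proof. by have [uC _] := cC; rewrite (perm_uniq (perm_canon _)) filter_uniq. Qed.

Lemma causally_closed_dep_past : causally_closed H.
Proof.
have [_ [inUC [ccC _]]] := cC.
move=> x; rewrite mem_dep_past => /andP [xC /hasP [b bC /andP [dep xb]]] p hp.
rewrite mem_dep_past (ccC x xC p hp); apply/hasP; exists b; rewrite // dep.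
exact: causally_closed_loc (inUC b bC) x xb p hp.
Qed.

Lemma dep_event_notin : e \notin C.
Proof.
have [_ [irr _]] := HW.
apply/negP => eC; have /negP := notin_hist e; apply; rewrite /= mem_dep_past eC.
by apply/hasP; exists e; rewrite // mem_head andbT; apply/negP => /indepbP /irr.
Qed.

Lemma conflict_free_dep_event : conflict_free indep (e :: C).
Proof.
have [_ [_ [ccC cfC]]] := cC.
apply: (@conflict_free_cons C e) cfC ccC dep_past_sub _ => a aC.
by rewrite inE negb_or => /andP [_]; apply: dep_past_indep.
Qed.

Lemma stateC_dep_event : stateC app d0 (e :: C) = app f (stateC app d0 C).
Proof.
have [uC [_ [ccC cfC]]] := cC.
exact: (@stateC_cons C uC ccC cfC e) dep_event_notin dep_past_sub conflict_free_dep_event.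
Qed.

Lemma stateC_loc_dep_event : stateC app d0 (loc e) = app f (stateC app d0 H).
Proof.
have cf_loc : conflict_free indep (loc e).
  apply: conflict_free_sub (conflict_free_dep_event) => x.
  by rewrite !inE => /orP [-> // | /dep_past_sub ->]; rewrite orbT.
apply: (@stateC_cons H uniq_dep_past causally_closed_dep_past _ e) => //.
- by apply: conflict_free_sub cf_loc => x xH; rewrite inE xH orbT.
- exact: (notin_hist e).
Qed.

Lemma app_stateC_dep_past :
  app f (stateC app d0 C) =
  run app (stateC app d0 (loc e)) (labs [seq x <- lin C | x \notin H]).
Proof.
have [uC [_ [ccC cfC]]] := cC.
rewrite (stateC_closed_sub uC cfC uniq_dep_past causally_closed_dep_past dep_past_sub).
rewrite stateC_loc_dep_event app_run_indep //.
  exact: reach_stateC uniq_dep_past causally_closed_dep_past (conflict_free_sub dep_past_sub cfC).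
move=> _ /mapP [x + ->]; rewrite mem_filter (perm_mem (perm_lin C)) => /andP [xH xC].
exact: dep_past_indep.
Qed.

Lemma inU_dep_event : app f (stateC app d0 H) != \bot -> inU e.
Proof.
have [uC [inUC [ccC cfC]]] := cC.
move=> enabled; constructor.
- exact: canonical_hist_canon.
- exact: uniq_dep_past.
- by move=> x /dep_past_sub /inUC.
- exact: causally_closed_dep_past.
- exact: conflict_free_sub dep_past_sub cfC.
- exact: enabled.
move=> x [xH xmax]; have := xH; rewrite mem_dep_past => /andP [xC /hasP [b bC /andP [dep]]].
have bH : b \in H by rewrite mem_dep_past bC; apply/hasP; exists b; rewrite // dep mem_head.
by rewrite inE (negbTE (xmax b bH)) orbF => /eqP ->; apply/indepbP.
Qed.

End DepPast.

Local Notation P := (in_feasible_prefix app d0 indep).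

Lemma config_of_cons (Q : event -> Prop) (C : seq event) e :
  config_of indep Q C -> Q e -> e \notin C -> {subset hist e <= C} ->
  conflict_free indep (e :: C) -> config_of indep Q (e :: C).
Proof.
move=> [uC [QC [ccC _]]] Qe eC he cf; split; first by rewrite /= eC uC.
split; first by move=> x; rewrite inE => /orP [/eqP -> | /QC].
split=> // x; rewrite inE => /orP [/eqP -> | xC] p hp; rewrite inE.
  by rewrite he ?orbT.
by rewrite (ccC x xC p hp) orbT.
Qed.

Lemma config_of_prefix C : config_of indep P C -> config_of indep inU C.
Proof. by case=> uC [PC cc]; split=> //; split=> // x /PC [[]]. Qed.

Definition covers (s : seq Fn) : Prop :=
  exists2 C, config_of indep P C &
    (size C <= size s)%N /\ run app d0 s <= stateC app d0 C.

Lemma covers_init s : run app d0 s <= d0 -> covers s.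
Proof. by move=> le_s; exists [::]. Qed.

Lemma covers_rcons s f :
  (forall t, (size t <= size s)%N -> covers t) -> covers (rcons s f).
Proof.
have [_ [mono _]] := HA.
move=> IH; have [C PC [szC leC]] := IH s (leqnn _).
have [bot | ne0] := eqVneq (run app d0 (rcons s f)) \bot.
  by apply: covers_init; rewrite bot le0x.
have cC := config_of_prefix PC.
set H := dep_past f C; set e := Ev f H; set R := [seq x <- lin C | x \notin H].
have le_R : run app d0 (rcons s f) <= run app (stateC app d0 (loc e)) (labs R).
  by rewrite -cats1 run_cat -app_stateC_dep_past //; apply: mono.
have inUe : inU e.
  apply: inU_dep_event => //; rewrite -stateC_loc_dep_event //.
  apply: contra_neq ne0 => bot; apply/eqP; rewrite -lex0 -(run_bot (labs R)) -bot.
  exact: le_R.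
have [[_ [e' [[inUe' _] [lt_e' le_e']]]] | ncut] := classic (cutoff app d0 indep e).
  set t := labs (lin (loc e')) ++ labs R.
  have szt : (size t <= size s)%N.
    rewrite size_cat !size_map (perm_size (perm_lin _)); apply: leq_trans szC.
    have [uC _] := cC; rewrite -(size_filter_lin uC (uniq_dep_past f cC) (@dep_past_sub f C)).
    by rewrite leq_add2r -ltnS.
  have [C' PC' [szC' leC']] := IH t szt.
  exists C' => //; split; first by rewrite size_rcons ltnW // ltnS (leq_trans szC').
  apply: le_trans le_R (le_trans _ leC'); rewrite run_cat; apply/run_le.
  apply: le_trans le_e' (stateC_le (perm_lin _) (lin_respects _)).
  exact: causally_closed_loc.
exists (e :: C); last first.
  by rewrite size_rcons ltnS szC stateC_dep_event // -cats1 run_cat /=; split=> //; apply: mono.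
have [_ [PCmem _]] := PC.
apply: config_of_cons => //; last exact: conflict_free_dep_event.
- by split=> //; split=> // p /dep_past_sub /PCmem [].
- exact: dep_event_notin.
- exact: dep_past_sub.
Qed.

Lemma covers_all s : covers s.
Proof.
elim: {s}(size s) {-2}s (leqnn (size s)) => [|n IH] s.
  by rewrite leqn0 => /nilP ->; apply: covers_init.
case/lastP: s => [_|s f]; first exact: covers_init.
rewrite size_rcons ltnS => szs; apply: covers_rcons => t szt.
exact/IH/(leq_trans szt).
Qed.

End Unfolding.

Theorem theorem6 (disp : Order.disp_t) (D : bLatticeType disp)
    (Fn : choiceType) (app : Fn -> D -> D) (d0 : D)
    (indep : Fn -> Fn -> Prop) :
  analysis_instance app ->
  weak_independence app d0 indep ->
  D_complete app d0 indep (in_feasible_prefix app d0 indep).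
Proof.
move=> HA HW _ [s ->].
by have [C PC [_ le_s]] := covers_all HA HW s; exists C.
Qed.
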